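(* Let $K$ be a finite field of odd characteristic $p$ and order $q$, let $s$ be a positive integer with $\gcd(s,q-1)=1$, and for $u\in K^\times$ let $\Phi_u=W_u-W_{-u}$ and $\Omega_u=W_u+W_{-u}$. Then (i) $\sum_{u\in K^\times}\Phi_u=0$; (ii) $\sum_{u\in K^\times}\Phi_u^2=2q^2$; (iii) $\sum_{u\in K^\times}\Phi_u^2\Omega_u=2q^2(V_1-V_{-1})$; (iv) $\sum_{u\in K^\times}\Phi_u^4=q^2\sum_{u\in K^\times}(V_u+V_{-u}-2U_u)^2$.
   Context: $\zeta=\exp(2\pi i/p)$, $\psi(x)=\zeta^{\mathrm{Tr}(x)}$ with $\mathrm{Tr}$ the absolute trace of $K$ to $\mathbb{F}_p$; $W_u=\sum_{x\in K}\psi(x^s-ux)$. Let $1/s$ denote the inverse of $s$ modulo $q-1$. For $t=(t_1,t_2)\in(K^\times)^2$ and $a,b\in K$, $Q^t_{a,b}$ is the number of $(v_1,v_2)\in K^2$ with $t_1v_1+t_2v_2=a$ and $(v_1^s+v_2^s)^{1/s}=b$. For $u\in K^\times$, $V_u=Q^{(1,1)}_{1,u}-Q^{(1,1)}_{1,0}$ and $U_u=Q^{(1,-1)}_{1,u}-Q^{(1,-1)}_{1,0}$. *)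

From mathcomp Require Import all_boot all_algebra all_field.
From mathcomp Require Import reals trigo.
From mathcomp Require Import complex.
Import GRing.Theory Num.Theory.
Set Implicit Arguments. Unset Strict Implicit. Unset Printing Implicit Defensive.
Local Open Scope ring_scope.

Section Defs.
Variables (R : realType) (K : finFieldType) (p s : nat).

Definition zeta : R[i] := Complex (cos (2 * pi / p%:R)) (sin (2 * pi / p%:R)).

(* absolute trace K -> F_p, as an element of K: Tr(x) = sum_{i<n} x^(p^i), q = p^n *)
Definition absTr (x : K) : K := \sum_(i < logn p #|K|) x ^+ (p ^ i).

Definition absTr_nat (x : K) : nat :=
  odflt 0%N (omap (@nat_of_ord p) [pick k : 'I_p | (k%:R : K) == absTr x]).

Definition psi (x : K) : R[i] := zeta ^+ absTr_nat x.

Definition W (u : K) : R[i] := \sum_(x : K) psi (x ^+ s - u * x).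

Definition Phi (u : K) : R[i] := W u - W (- u).
Definition Omega (u : K) : R[i] := W u + W (- u).

Definition sinv : nat :=
  odflt 0%N (omap (@nat_of_ord #|K|.-1)
    [pick t : 'I_(#|K|.-1) | (s * t == 1 %[mod #|K|.-1])%N]).

Definition sroot (y : K) : K := y ^+ sinv.

Definition Q (t1 t2 a b : K) : nat :=
  #|[set v : K * K | (t1 * v.1 + t2 * v.2 == a)
                     && (sroot (v.1 ^+ s + v.2 ^+ s) == b)]|.

Definition V (u : K) : int := (Q 1 1 1 u)%:Z - (Q 1 1 1 0)%:Z.
Definition U (u : K) : int := (Q 1 (-1) 1 u)%:Z - (Q 1 (-1) 1 0)%:Z.

End Defs.

From Pilot Require Import Defs.
From mathcomp Require Import all_boot all_algebra all_field.
From mathcomp Require Import reals trigo.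
From mathcomp Require Import complex.
From mathcomp Require Import ring.
Import GRing.Theory Num.Theory.
Set Implicit Arguments. Unset Strict Implicit. Unset Printing Implicit Defensive.
Local Open Scope ring_scope.

(* Since x |-> x^s is a bijection of K and psi is a nontrivial additive character,
   the sums W satisfy the orthogonality relation
     sum_u W_(a u) W_(b u) = q^2 [a = b != 0].
   Expanding W_u W_(e u), e = +-1, as a sum over (v1, v2) and grouping the terms by
   a = v1 + e v2 and b = (v1^s + v2^s)^(1/s), the homogeneity Q_(a, a c) = Q_(1, c) gives
     W_u^2 = sum_b Q^(1,1)_(1,b) W_(u/b),   W_u W_(-u) = -q + sum_b Q^(1,-1)_(1,b) W_(u/b).
   As Q^(1,1)_(1,0) = 0, Q^(1,-1)_(1,0) = 1 and sum_b W_(u/b) = q, this yields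
   Phi_u^2 = sum_b (V_b + V_(-b) - 2 U_b) W_(u/b), and the four moments follow from
   orthogonality. *)

Lemma sum_punctured (I : finType) (V : nmodType) (i0 : I) (F : I -> V) :
  F i0 = 0 -> \sum_(i | i != i0) F i = \sum_i F i.
Proof. by move=> F0; rewrite [RHS](bigD1 i0) //= F0 add0r. Qed.

Lemma sum_mul_ifeq (I : finType) (R : pzSemiRingType) (F : I -> R) i0 c :
  \sum_i F i * (if i == i0 then c else 0) = F i0 * c.
Proof. by rewrite (bigD1 i0) //= eqxx big1 ?addr0 // => i /negbTE ->; rewrite mulr0. Qed.

Lemma sum_oppr (K : finZmodType) (V : nmodType) (F : K -> V) :
  \sum_u F (- u) = \sum_u F u.
Proof. by rewrite [RHS](reindex_inj oppr_inj). Qed.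

Section PowerMap.
Variables (K : finFieldType) (s : nat).
(* For #|K| = 2 the congruence defining [sinv] is vacuous, [sinv] is 0 and [sroot s] is
   constantly 1. *)
Hypotheses (K_gt2 : (2 < #|K|)%N) (s_coprime : coprime s #|K|.-1).

Let m_gt1 : (1 < #|K|.-1)%N.
Proof. by case: #|K| K_gt2 => [|[|[|]]]. Qed.

Lemma mul_sinv_mod : (s * sinv K s = 1 %[mod #|K|.-1])%N.
Proof.
rewrite /sinv; case: pickP => [t /eqP //|no_inverse]; exfalso.
pose t : 'Z_(#|K|.-1) := (s%:R)^-1.
have t_lt : (t < #|K|.-1)%N by rewrite -[X in (_ < X)%N](Zp_cast m_gt1) ltn_ord.
move: (no_inverse (Ordinal t_lt)); rewrite /= -!(val_Zp_nat m_gt1) natrM natr_Zp.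
by rewrite mulrV ?eqxx // unitZpE // coprime_sym.
Qed.

Lemma expr_card_pred (y : K) : y != 0 -> y ^+ #|K|.-1 = 1.
Proof.
move=> y0; apply: (mulfI y0); rewrite mulr1 -exprS prednK ?expf_card //.
exact: ltn_trans K_gt2.
Qed.

Lemma expr_sinv (y : K) : y ^+ (s * sinv K s) = y.
Proof.
have -> : (s * sinv K s = (s * sinv K s) %/ #|K|.-1 * #|K|.-1 + 1)%N.
  by rewrite {1}(divn_eq (s * sinv K s) #|K|.-1) mul_sinv_mod modn_small.
have [->|y0] := eqVneq y 0; first by rewrite addn1 expr0n.
by rewrite exprD mulnC exprM expr_card_pred // expr1n mul1r.
Qed.

Lemma srootK (y : K) : sroot s y ^+ s = y.
Proof. by rewrite /sroot -exprM mulnC expr_sinv. Qed.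

Lemma exprsK (y : K) : sroot s (y ^+ s) = y.
Proof. by rewrite /sroot -exprM expr_sinv. Qed.

Lemma exprs_inj : injective (fun y : K => y ^+ s).
Proof. exact: can_inj exprsK. Qed.

Lemma sroot_eq0 (y : K) : (sroot s y == 0) = (y == 0).
Proof.
have s_gt0 : (0 < s)%N.
  by move: s_coprime; rewrite lt0n; apply: contraTneq => ->; rewrite /coprime gcd0n gtn_eqF.
by rewrite -[y in RHS]srootK [in RHS]expf_eq0 s_gt0.
Qed.

End PowerMap.

Section Trace.
Variables (K : finFieldType) (p : nat).
Hypothesis pcharK : p \in [pchar K].

Local Notation Tr := (absTr p).
Let p_prime : prime p := pcharf_prime pcharK.
Let card_K : #|K| = (p ^ logn p #|K|)%N := card_pprimeChar pcharK.

Let logn_card_gt0 : (0 < logn p #|K|)%N.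
Proof. by have := finNzRing_gt1 K; rewrite {1}card_K; case: (logn p #|K|). Qed.

Lemma absTrD (x y : K) : Tr (x + y) = Tr x + Tr y.
Proof.
rewrite /absTr -big_split /=; apply: eq_bigr => i _.
by rewrite exprDn_pchar // pnatX pnatE // pcharK.
Qed.

Lemma absTr0 : Tr 0 = 0 :> K.
Proof. by apply: (addrI (Tr 0)); rewrite -absTrD !addr0. Qed.

Lemma absTr_frob (x : K) : Tr x ^+ p = Tr x.
Proof.
rewrite /absTr -(pFrobenius_autE pcharK) rmorph_sum /=.
under eq_bigr => i _ do rewrite pFrobenius_autE -exprM -expnSr.
move: card_K logn_card_gt0; case: (logn p #|K|) => // n card_Kn _.
rewrite big_ord_recr [RHS]big_ord_recl /= -card_Kn expf_card expn0 expr1.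
by rewrite addrC; congr (_ + _); apply: eq_bigr.
Qed.

Lemma absTrZ (c x : K) : c ^+ p = c -> Tr (c * x) = c * Tr x.
Proof.
move=> c_fixed; rewrite /absTr mulr_sumr; apply: eq_bigr => i _.
rewrite exprMn; congr (_ * _); elim: (nat_of_ord i) => [|j IHj]; first by rewrite expn0 expr1.
by rewrite expnSr exprM IHj.
Qed.

Lemma natr_inj_lt (i j : nat) :
  (i < p)%N -> (j < p)%N -> (i%:R == j%:R :> K) = (i == j).
Proof.
wlog ij : i j / (i <= j)%N.
  move=> wlog_ij ip jp; case/orP: (leq_total i j) => /wlog_ij; first exact.
  by rewrite eq_sym [i == j]eq_sym => ->.
move=> ip jp; rewrite eq_sym -subr_eq0 -natrB // -(dvdn_pcharf pcharK) -eqn_mod_dvd //.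
by rewrite !modn_small.
Qed.

Lemma frob_fixed_natr (y : K) : y ^+ p = y -> exists k : 'I_p, k%:R = y.
Proof.
move=> y_fixed; have [/existsP[k /eqP]|/existsPn not_natr] :=
  boolP [exists k : 'I_p, k%:R == y]; first by exists k.
exfalso.
pose P : {poly K} := 'X^p - 'X.
have size_P : size P = p.+1.
  by rewrite /P size_polyDl size_polyXn // size_polyN size_polyX ltnS prime_gt1.
have P_neq0 : P != 0 by rewrite -size_poly_eq0 size_P.
pose roots := y :: [seq (val k)%:R | k <- enum 'I_p].
have := max_poly_roots P_neq0 (rs := roots).
have -> : all (root P) roots.
  rewrite /= rootE /P !hornerE y_fixed subrr eqxx /=; apply/allP => _ /mapP[k _ ->].
  by rewrite rootE !hornerE -(pFrobenius_autE pcharK) pFrobenius_aut_nat subrr.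
have -> : uniq roots.
  rewrite /= map_inj_uniq ?enum_uniq ?andbT.
    by apply/mapP => -[k _ yk]; have := not_natr k; rewrite yk eqxx.
  by move=> i j /eqP; rewrite natr_inj_lt // => /eqP/val_inj.
by rewrite /= size_map size_enum_ord size_P ltnn => /(_ isT isT).
Qed.

Lemma absTr_natP (x : K) : (absTr_nat p x)%:R = Tr x /\ (absTr_nat p x < p)%N.
Proof.
rewrite /absTr_nat; case: pickP => [k /= /eqP -> //|/= no_k].
by have [k k_Tr] := frob_fixed_natr (absTr_frob x); move: (no_k k); rewrite k_Tr eqxx.
Qed.

Lemma absTr_natE (x : K) (k : nat) : (k < p)%N -> k%:R = Tr x -> absTr_nat p x = k.
Proof.
move=> kp k_Tr; have [Tr_nat Tr_lt] := absTr_natP x.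
by apply/eqP; rewrite -natr_inj_lt // k_Tr Tr_nat.
Qed.

Lemma exists_absTr_eq1 : exists a : K, Tr a = 1.
Proof.
have [/existsP[a Tra]|/existsPn Tr_eq0] := boolP [exists a : K, Tr a != 0].
  exists ((Tr a)^-1 * a); rewrite absTrZ ?mulVf //.
  by rewrite exprVn absTr_frob.
exfalso.
pose P : {poly K} := \sum_(i < logn p #|K|) 'X^(p ^ i).
have P_Tr x : P.[x] = Tr x.
  by rewrite /P horner_sum; apply: eq_bigr => i _; rewrite hornerXn.
have P_neq0 : P != 0.
  apply/eqP => /(congr1 (fun P : {poly K} => P`_1)); rewrite coef0 /P coef_sum.
  case: (logn p #|K|) logn_card_gt0 => // n _.
  rewrite big_ord_recl /= coefXn expn0 eqxx big1 ?addr0; first exact/eqP/oner_neq0.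
  move=> i _; rewrite coefXn ltn_eqF //.
  by rewrite -[X in (X < _)%N](expn0 p) ltn_exp2l ?prime_gt1.
have size_P : (size P <= #|K|)%N.
  apply: leq_trans (size_sum _ _ _) _; apply/bigmax_leqP => i _.
  by rewrite size_polyXn {2}card_K ltn_exp2l // prime_gt1.
have := max_poly_roots P_neq0 (rs := enum K).
have -> : all (root P) (enum K).
  by apply/allP => x _; rewrite rootE P_Tr; have := Tr_eq0 x; rewrite negbK.
by rewrite enum_uniq -cardE ltnNge size_P => /(_ isT isT).
Qed.

End Trace.

Section AdditiveCharacter.
Variables (R : realType) (K : finFieldType) (p : nat).
Hypotheses (pcharK : p \in [pchar K]) (p_gt2 : (2 < p)%N).

Local Notation z := (zeta R p).
Local Notation psi := (psi R p).
Let p_gt0 : (0 < p)%N := prime_gt0 (pcharf_prime pcharK).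

Let th : R := 2 * pi / p%:R.

Lemma zetaX k : z ^+ k = Complex (cos (th *+ k)) (sin (th *+ k)).
Proof.
elim: k => [|k IHk]; first by rewrite expr0 !mulr0n cos0 sin0.
rewrite exprS IHk mulrS cosD sinD /zeta -/th.
apply/eqP; rewrite eq_complex /=; apply/andP; split; apply/eqP => //.
by rewrite addrC.
Qed.

Lemma zeta_expp : z ^+ p = 1.
Proof.
rewrite zetaX /th -!(mulr_natr (2 * pi / p%:R)) mulfVK ?pnatr_eq0 -?lt0n //.
by rewrite mulr_natl cos2pi sin2pi.
Qed.

Lemma zeta_neq1 : z != 1.
Proof.
apply/eqP => /(congr1 (@complex.Im R)) /= /eqP; apply/negP; apply: lt0r_neq0.
have two_pi_gt0 : (0 : R) < 2 * pi by rewrite mulr_gt0 ?pi_gt0.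
apply: sin_gt0_pi; rewrite divr_gt0 ?ltr0n //= ltr_pdivrMr ?ltr0n //.
by rewrite [pi * _]mulrC ltr_pM2r ?pi_gt0 // ltr_nat.
Qed.

Lemma psiD (x y : K) : psi (x + y) = psi x * psi y.
Proof.
rewrite /Defs.psi -exprD -[in RHS](expr_mod _ zeta_expp); congr (_ ^+ _).
have [Tr_x _] := absTr_natP pcharK x; have [Tr_y _] := absTr_natP pcharK y.
apply: (absTr_natE pcharK); first by rewrite ltn_mod.
by rewrite (GRing.natr_mod_pchar pcharK) natrD Tr_x Tr_y absTrD.
Qed.

Lemma psi0 : psi (0 : K) = 1.
Proof. by rewrite /Defs.psi (@absTr_natE _ _ pcharK 0 0) ?absTr0. Qed.

Lemma sum_psi : \sum_(x : K) psi x = 0.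
Proof.
have [a Tr_a] := exists_absTr_eq1 pcharK.
have psi_a : psi a = z by rewrite /Defs.psi (@absTr_natE _ _ pcharK a 1) ?Tr_a ?expr1 // ltnW.
have : (psi a - 1) * \sum_(x : K) psi x == 0.
  rewrite mulrBl mul1r mulr_sumr [X in _ - X](reindex_inj (addrI a)) /=.
  by rewrite -sumrB big1 // => x _; rewrite psiD subrr.
by rewrite mulf_eq0 subr_eq0 psi_a (negbTE zeta_neq1) => /eqP.
Qed.

Lemma sum_psiM (c : K) : \sum_(x : K) psi (c * x) = if c == 0 then #|K|%:R else 0.
Proof.
have [->|c_neq0] := eqVneq c 0.
  by under eq_bigr do rewrite mul0r psi0; rewrite sumr_const -mulr_natl mulr1.
by rewrite -[RHS]sum_psi [RHS](reindex_inj (mulfI c_neq0)).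
Qed.

End AdditiveCharacter.

Section WeilSums.
Variables (R : realType) (K : finFieldType) (p s : nat).
Hypotheses (pcharK : p \in [pchar K]) (p_odd : odd p) (s_coprime : coprime s #|K|.-1).

Local Notation C := R[i].
Local Notation psi := (@psi R K p).
Local Notation W := (@W R K p s).
Local Notation q := #|K|.

Let p_gt2 : (2 < p)%N.
Proof. by have := prime_gt1 (pcharf_prime pcharK); case: p p_odd => [|[|[|]]]. Qed.

Let q_odd : odd q.
Proof. by rewrite (card_pprimeChar pcharK) oddX p_odd orbT. Qed.

Let K_gt2 : (2 < q)%N.
Proof. by have := finNzRing_gt1 K; case: #|K| q_odd => [|[|[|]]]. Qed.

Let s_odd : odd s.
Proof.
rewrite -coprimen2; apply: coprime_dvdr s_coprime.
by case: #|K| q_odd => // k /=; rewrite dvdn2.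
Qed.

Let exprs0 : 0 ^+ s = 0 :> K.
Proof. by rewrite expr0n; case: (s) s_odd. Qed.

Lemma exprsN (y : K) : (- y) ^+ s = - y ^+ s.
Proof. by rewrite exprNn -signr_odd s_odd expr1 mulN1r. Qed.

Let two_neq0 : (2 : K) != 0.
Proof.
by rewrite -[2]/(2%:R) -(dvdn_pcharf pcharK) gtnNdvd // ltnW.
Qed.

Lemma sum_psi_exprs (c : K) :
  \sum_(x : K) psi (c * x ^+ s) = if c == 0 then q%:R else 0.
Proof.
by rewrite -(sum_psiM R pcharK p_gt2) [RHS](reindex_inj (exprs_inj K_gt2 s_coprime)).
Qed.

Lemma W0 : W 0 = 0.
Proof.
rewrite /Defs.W; under eq_bigr do rewrite mul0r subr0 -[_ ^+ s]mul1r.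
by rewrite sum_psi_exprs oner_eq0.
Qed.

Lemma W_mul (a b u : K) : W (a * u) * W (b * u) =
  \sum_(x : K) \sum_(y : K) psi (x ^+ s + y ^+ s) * psi (- (a * x + b * y) * u).
Proof.
rewrite /Defs.W mulr_suml; apply: eq_bigr => x _; rewrite mulr_sumr.
by apply: eq_bigr => y _; rewrite -!(psiD R pcharK); congr (psi _); ring.
Qed.

Lemma sum_W_mul (a b : K) : \sum_(u : K) W (a * u) * W (b * u) =
  if (a == b) && (b != 0) then (q ^ 2)%:R else 0.
Proof.
have [->|b_neq0] := eqVneq b 0.
  by rewrite andbF big1 // => u _; rewrite mul0r W0 mulr0.
rewrite andbT.
transitivity (\sum_(x : K) psi ((1 - (a / b) ^+ s) * x ^+ s) * q%:R).
  under eq_bigr do rewrite W_mul.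
  rewrite exchange_big /=; apply: eq_bigr => x _; rewrite exchange_big /=.
  under eq_bigr do rewrite -mulr_sumr (sum_psiM R pcharK p_gt2).
  have line_eq0 y : (- (a * x + b * y) == 0) = (y == - (a * x) / b).
    apply/eqP/eqP => [axby0|->]; last by field.
    have by_eq : b * y = - (a * x) by rewrite -[LHS]addr0 -axby0; ring.
    by rewrite -by_eq; field.
  under eq_bigr do rewrite line_eq0.
  by rewrite sum_mul_ifeq mulNr exprsN mulrAC exprMn; congr (psi _ * _); ring.
rewrite -mulr_suml sum_psi_exprs subr_eq0 eq_sym -{1}(expr1n K s).
rewrite (inj_eq (exprs_inj K_gt2 s_coprime)) -[a == b](inj_eq (mulIf (invr_neq0 b_neq0))).
rewrite divff //; case: (a / b == 1); last by rewrite mul0r.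
by rewrite -natrM mulnn.
Qed.

(* The point (v, e (1 - v)) runs over the line v1 + e v2 = 1. *)
Definition line_snorm (e v : K) : K := sroot s (v ^+ s + (e * (1 - v)) ^+ s).

Lemma Q_line_card (e b : K) : e * e = 1 ->
  Q s 1 e 1 b = #|[set v : K | line_snorm e v == b]|.
Proof.
move=> ee; have point_inj : injective (fun v : K => (v, e * (1 - v))) by move=> v w [].
rewrite -(card_imset _ point_inj).
apply: eq_card => -[v1 v2]; rewrite !inE /=.
apply/andP/imsetP => [[/eqP line b_eq]|[v]].
  have v2E : v2 = e * (1 - v1) by rewrite -line mul1r addrC addKr mulrA ee mul1r.
  by exists v1; [rewrite inE /line_snorm -v2E | rewrite -v2E].
rewrite inE => snorm_v [-> ->]; split; last exact: snorm_v.
by rewrite mulrA ee !mul1r addrC subrK.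
Qed.

Lemma sum_line_snorm (e : K) (F : K -> C) : e * e = 1 ->
  \sum_(v : K) F (line_snorm e v) = \sum_(b : K) (Q s 1 e 1 b)%:R * F b.
Proof.
move=> ee; rewrite (partition_big (line_snorm e) xpredT) //=; apply: eq_bigr => b _.
rewrite (eq_bigr (fun _ => F b)); last by move=> v /eqP ->.
rewrite (eq_bigl (mem [set v : K | line_snorm e v == b])) ?sumr_const.
  by rewrite Q_line_card // mulr_natl.
by move=> v /=; rewrite inE.
Qed.

(* This also holds for r = 0, where u / 0 = 0 and W 0 = 0. *)
Lemma W_div_punctured (u r : K) : u != 0 ->
  \sum_(a : K | a != 0) psi ((a * r) ^+ s - u * a) = W (u / r) - 1.
Proof.
move=> u_neq0.
have -> : W (u / r) = \sum_(a : K) psi ((a * r) ^+ s - u * a).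
  have [->|r_neq0] := eqVneq r 0.
    under eq_bigr do rewrite mulr0 exprs0 sub0r -mulNr.
    by rewrite invr0 mulr0 W0 sum_psiM // oppr_eq0 (negbTE u_neq0).
  rewrite /Defs.W (reindex_inj (mulIf r_neq0)) /=; apply: eq_bigr => a _.
  by congr (psi (_ - _)); field.
by rewrite [in RHS](bigD1 0) //= mul0r exprs0 mulr0 subr0 (psi0 R pcharK) addrAC subrr add0r.
Qed.

Lemma W_mul_line (e u : K) : e * e = 1 ->
  W u * W (e * u)
  = \sum_(a : K) psi (- (u * a)) * \sum_(x : K) psi (x ^+ s + (e * (a - x)) ^+ s).
Proof.
move=> ee; have e_neq0 : e != 0.
  by apply/eqP => e0; move: ee; rewrite e0 mul0r => /eqP; rewrite eq_sym oner_eq0.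
have shift_inj x : injective (fun a : K => e * (a - x)).
  by move=> a1 a2 /= /(mulfI e_neq0) /addIr.
rewrite -{1}[u]mul1r W_mul.
under eq_bigr => x _ do rewrite (reindex_inj (shift_inj x)) /=.
rewrite exchange_big /=; apply: eq_bigr => a _; rewrite mulr_sumr.
apply: eq_bigr => x _; rewrite mulrC mulrA ee; congr (psi _ * _); ring.
Qed.

Lemma sum_line_punctured (e u : K) : e * e = 1 -> u != 0 ->
  \sum_(a : K | a != 0) psi (- (u * a)) * \sum_(x : K) psi (x ^+ s + (e * (a - x)) ^+ s)
  = \sum_(v : K) W (u / line_snorm e v) - q%:R.
Proof.
move=> ee u_neq0.
transitivity (\sum_(v : K) (W (u / line_snorm e v) - 1)); last first.
  by rewrite sumrB sumr_const.
under [RHS]eq_bigr do rewrite -W_div_punctured //.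
rewrite [RHS]exchange_big /=; apply: eq_bigr => a a_neq0; rewrite mulr_sumr.
rewrite (reindex_inj (mulfI a_neq0)) /=; apply: eq_bigr => v _.
rewrite -(psiD R pcharK); congr (psi _).
rewrite [in RHS]exprMn /line_snorm srootK //.
rewrite (_ : e * (a - a * v) = a * (e * (1 - v))); last by ring.
by rewrite !exprMn; ring.
Qed.

Lemma W_mul_unit (e u : K) : e * e = 1 -> u != 0 ->
  W u * W (e * u) = \sum_(x : K) psi (x ^+ s + (- (e * x)) ^+ s) - q%:R
                    + \sum_(b : K) (Q s 1 e 1 b)%:R * W (u / b).
Proof.
move=> ee u_neq0; rewrite W_mul_line // (bigD1 0) //= mulr0 oppr0 (psi0 R pcharK) mul1r.
under eq_bigr do rewrite sub0r mulrN.
by rewrite sum_line_punctured // (sum_line_snorm (fun b => W (u / b))) // addrA addrAC.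
Qed.

Lemma W_sqr (u : K) : W u ^+ 2 = \sum_(b : K) (Q s 1 1 1 b)%:R * W (u / b).
Proof.
have [->|u_neq0] := eqVneq u 0.
  by rewrite W0 expr0n /= big1 // => b _; rewrite mul0r W0 mulr0.
rewrite expr2 -{2}[u]mul1r W_mul_unit ?mulr1 //.
under eq_bigr do rewrite mul1r exprsN subrr (psi0 R pcharK).
by rewrite sumr_const subrr add0r.
Qed.

Lemma W_mulN (u : K) : u != 0 ->
  W u * W (- u) = - q%:R + \sum_(b : K) (Q s 1 (-1) 1 b)%:R * W (u / b).
Proof.
move=> u_neq0; rewrite -[- u]mulN1r W_mul_unit ?mulrNN ?mulr1 //.
under eq_bigr do rewrite mulN1r opprK -mulr2n -mulr_natl.
by rewrite sum_psi_exprs (negbTE two_neq0) sub0r.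
Qed.

Lemma Q11_b0 : Q s 1 1 1 (0 : K) = 0%N.
Proof.
rewrite Q_line_card ?mulr1 //; apply/eqP; rewrite cards_eq0; apply/eqP/setP => v.
rewrite !inE /line_snorm sroot_eq0 // mul1r addr_eq0 -exprsN opprB.
by rewrite (inj_eq (exprs_inj K_gt2 s_coprime)) -subr_eq0 opprB addrC subrK oner_eq0.
Qed.

Lemma Q1N1_b0 : Q s 1 (-1) 1 (0 : K) = 1%N.
Proof.
rewrite Q_line_card ?mulrNN ?mulr1 // -(cards1 (2^-1 : K)); congr #|pred_of_set _|.
apply/setP => v; rewrite !inE /line_snorm sroot_eq0 // mulN1r exprsN subr_eq0.
rewrite (inj_eq (exprs_inj K_gt2 s_coprime)); apply/eqP/eqP => [v_eq|->].
  by apply: (mulfI two_neq0); rewrite mulfV // mulr_natl mulr2n {2}v_eq addrC subrK.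
by apply: (mulfI two_neq0); rewrite mulrBr mulr1 mulfV // -[2]/(1 + 1) addrK.
Qed.

Lemma sum_W_div (u : K) : u != 0 -> \sum_(b : K) W (u / b) = q%:R.
Proof.
move=> u_neq0.
have div_inj : injective (fun b : K => u / b) by move=> b1 b2 /= /(mulfI u_neq0) /invr_inj.
transitivity (\sum_(c : K) W c); first by rewrite [RHS](reindex_inj div_inj).
rewrite /Defs.W exchange_big /=.
have psi_split x c : psi (x ^+ s - c * x) = psi (x ^+ s) * psi (- x * c).
  by rewrite -(psiD R pcharK) mulNr mulrC.
under eq_bigr => x _ do under eq_bigr => c _ do rewrite psi_split.
under eq_bigr do rewrite -mulr_sumr (sum_psiM R pcharK p_gt2) oppr_eq0.
by rewrite sum_mul_ifeq exprs0 (psi0 R pcharK) mul1r.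
Qed.

Lemma sum_W_sqr_mul (g : K) : g != 0 ->
  \sum_(u : K) W u ^+ 2 * W (g * u) = (Q s 1 1 1 g^-1)%:R * (q ^ 2)%:R.
Proof.
move=> g_neq0; under eq_bigr do rewrite W_sqr mulr_suml.
rewrite exchange_big /=.
under eq_bigr => b _ do under eq_bigr => u _ do rewrite -mulrA (mulrC u).
under eq_bigr do rewrite -mulr_sumr sum_W_mul g_neq0 andbT.
rewrite (eq_bigr (fun b => (Q s 1 1 1 b)%:R * (if b == g^-1 then (q ^ 2)%:R else 0))).
  by rewrite sum_mul_ifeq.
by move=> b _; rewrite -(inj_eq invr_inj) invrK.
Qed.

Local Notation Phi := (@Phi R K p s).
Local Notation Omega := (@Omega R K p s).

Lemma Phi0 : Phi 0 = 0.
Proof. by rewrite /Defs.Phi oppr0 subrr. Qed.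

Lemma sum_Phi : \sum_(u : K | u != 0) Phi u = 0.
Proof. by rewrite sum_punctured ?Phi0 // /Defs.Phi sumrB (sum_oppr W) subrr. Qed.

Lemma sum_Phi_sqr : \sum_(u : K | u != 0) Phi u ^+ 2 = (2 * q ^ 2)%:R.
Proof.
rewrite sum_punctured ?Phi0 ?expr0n //.
transitivity (\sum_(u : K) (W (1 * u) * W (1 * u) + W (-1 * u) * W (-1 * u)
   - 2 * (W (1 * u) * W (-1 * u)))).
  by apply: eq_bigr => u _; rewrite mul1r mulN1r /Defs.Phi; ring.
have one_neqN1 : (1 : K) != -1 by rewrite -subr_eq0 opprK.
rewrite sumrB big_split /= -mulr_sumr !sum_W_mul eqxx oppr_eq0 oner_eq0 (negbTE one_neqN1) /=.
by rewrite eqxx mulr0 subr0 natrM mulr_natl mulr2n.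
Qed.

Lemma sum_Phi_sqr_Omega : \sum_(u : K | u != 0) Phi u ^+ 2 * Omega u
  = (2 * q ^ 2)%:R * ((V s (1 : K) - V s (-1 : K))%:~R : C).
Proof.
rewrite sum_punctured ?Phi0 ?expr0n ?mul0r //.
pose A u := W u ^+ 2 * W (1 * u) - W u ^+ 2 * W (-1 * u).
transitivity (\sum_(u : K) A u + \sum_(u : K) A (- u)).
  rewrite -big_split /=; apply: eq_bigr => u _.
  by rewrite /A !mul1r !mulN1r opprK /Defs.Phi /Defs.Omega; ring.
rewrite (sum_oppr A) /A sumrB !sum_W_sqr_mul ?oppr_eq0 ?oner_eq0 // invr1 invrN1.
by rewrite /V !intrB -!pmulrn natrM mulr_natl !mulr2n; ring.
Qed.

Lemma Phi_sqr (u : K) :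
  Phi u ^+ 2 = \sum_(b : K) (V s b + V s (- b) - 2 * U s b)%:~R * W (u / b).
Proof.
have [->|u_neq0] := eqVneq u 0.
  by rewrite Phi0 expr0n /= big1 // => b _; rewrite mul0r W0 mulr0.
transitivity (W u ^+ 2 + W (- u) ^+ 2 - 2 * (W u * W (- u))).
  by rewrite /Defs.Phi; ring.
rewrite W_sqr (W_sqr (- u)) W_mulN // -[X in _ + X - _](sum_oppr (fun b => _ * W (- u / b))) /=.
under [X in _ + X - _]eq_bigr do rewrite invrN mulrNN.
have coef_split b : (V s b + V s (- b) - 2 * U s b)%:~R * W (u / b)
    = (Q s 1 1 1 b)%:R * W (u / b) + (Q s 1 1 1 (- b))%:R * W (u / b) + 2 * W (u / b)
      - 2 * ((Q s 1 (-1) 1 b)%:R * W (u / b)).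
  by rewrite /V /U Q11_b0 Q1N1_b0 !intrB !intrD intrM -!pmulrn; ring.
rewrite (eq_bigr _ (fun b _ => coef_split b)) sumrB !big_split /= -!mulr_sumr sum_W_div //.
ring.
Qed.

Lemma sum_Phi_pow4 : \sum_(u : K | u != 0) Phi u ^+ 4 =
  (q ^ 2)%:R * ((\sum_(u : K | u != 0) (V s u + V s (- u) - 2 * U s u) ^+ 2)%:~R : C).
Proof.
(* Square [Phi_sqr]: by orthogonality only the diagonal terms of the double sum survive. *)
pose G (b : K) : int := V s b + V s (- b) - 2 * U s b.
rewrite sum_punctured ?Phi0 ?expr0n //.
under eq_bigr do rewrite (_ : 4 = 2 * 2)%N // exprM Phi_sqr expr2 mulr_suml.
rewrite exchange_big /=.
under eq_bigr => b _ do under eq_bigr => u _ do rewrite mulr_sumr.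
under eq_bigr => b _ do rewrite exchange_big /=.
under eq_bigr => b _ do under eq_bigr => c _ do
  (under eq_bigr => u _ do rewrite mulrACA (mulrC u) (mulrC u);
   rewrite -mulr_sumr sum_W_mul (inj_eq invr_inj) invr_eq0).
rewrite rmorph_sum mulr_sumr [RHS]big_mkcond /=; apply: eq_bigr => b _.
rewrite (eq_bigr (fun c => (G b)%:~R * (G c)%:~R
                           * (if c == b then (if b != 0 then (q ^ 2)%:R else 0) else 0))).
  by rewrite sum_mul_ifeq; case: (b != 0); rewrite ?mulr0 // rmorphXn /= expr2 mulrC.
by move=> c _; rewrite eq_sym; case: eqP => // ->.
Qed.

End WeilSums.

Theorem lemma5p20 (R : realType) (K : finFieldType) (p s : nat)
  (hp : p \in [pchar K]) (hodd : odd p)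
  (hs : (0 < s)%N) (hcop : coprime s #|K|.-1) :
  let q := #|K| in
  [/\ \sum_(u : K | u != 0) Phi R p s u = 0,
      \sum_(u : K | u != 0) Phi R p s u ^+ 2 = (2 * q ^ 2)%:R,
      \sum_(u : K | u != 0) Phi R p s u ^+ 2 * Omega R p s u
        = (2 * q ^ 2)%:R * ((V s (1 : K) - V s (-1 : K))%:~R : R[i])
    & \sum_(u : K | u != 0) Phi R p s u ^+ 4
        = (q ^ 2)%:R *
          ((\sum_(u : K | u != 0) (V s u + V s (- u) - 2 * U s u) ^+ 2)%:~R : R[i])].
Proof.
move=> q; split.
- exact: sum_Phi.
- exact: (sum_Phi_sqr R hp hodd hcop).
- exact: (sum_Phi_sqr_Omega R hp hodd hcop).
- exact: (sum_Phi_pow4 R hp hodd hcop).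
Qed.
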